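(* Let $G$ be a finite abstract simplicial complex with connection graph $G'$. For $x\in G$ let $B(x)$ be the closed unit ball of $x$ in $G'$ and $d(x)$ the vertex degree of $x$ in $G'$. Then $d(x)=\sum_{y\in B(x)}\chi(S^+(y))$.
   Context: A finite abstract simplicial complex $G$ is a finite set of non-empty finite sets closed under taking non-empty subsets. The connection graph $G'$ has vertex set $G$, with distinct simplices adjacent iff they intersect; $B(x)$ consists of $x$ and all its neighbors in $G'$. The graph $G_1$ has vertex set $G$ with $x\neq y$ adjacent iff $x\subset y$ or $y\subset x$. For $y\in G$, $S^+(y)=\{z\in G: y\subsetneq z\}$, and $\chi(S^+(y))$ is the Euler characteristic $\sum_K(-1)^{|K|-1}$ over non-empty cliques $K$ of the subgraph of $G_1$ induced on $S^+(y)$ (so $\chi(\emptyset)=0$). *)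

From mathcomp Require Import all_boot all_order all_algebra.
Set Implicit Arguments. Unset Strict Implicit. Unset Printing Implicit Defensive.
Import GRing.Theory Num.Theory.

Section Complex.
Variable V : finType.

Definition is_complex (G : {set {set V}}) : bool :=
  [forall x in G, (x != set0) &&
     [forall y : {set V}, ((y != set0) && (y \subset x)) ==> (y \in G)]].

Definition conn_adj (x y : {set V}) : bool := (x != y) && (x :&: y != set0).

Definition ball (G : {set {set V}}) (x : {set V}) : {set {set V}} :=
  [set y in G | (y == x) || conn_adj x y].

Definition degree (G : {set {set V}}) (x : {set V}) : nat :=
  #|[set y in G | conn_adj x y]|.

Definition Splus (G : {set {set V}}) (y : {set V}) : {set {set V}} :=
  [set z in G | y \proper z].

Definition is_clique_G1 (K : {set {set V}}) : bool :=
  [forall a in K, forall b in K, (a != b) ==> ((a \subset b) || (b \subset a))].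

(* Euler characteristic of the subgraph of G_1 induced on A:
   sum over non-empty cliques K of (-1)^(|K|-1). *)
Definition chi (A : {set {set V}}) : int :=
  \sum_(K in powerset A | (K != set0) && is_clique_G1 K)
     ((-1) ^+ (#|K|.-1))%R.

End Complex.

(* Put w(y) = 1 - chi(S^+(y)). Splitting every nonempty chain of S^+(y) at its
   least element gives chi(S^+(y)) = sum_{m in S^+(y)} w(m), so w sums to 1
   over each upper set {m in G | y <= m}. Since B(x) = {y in G | x meets y},
   inclusion-exclusion over the nonempty faces v of x turns the sum of w over
   B(x) into sum_{v} (-1)^(|v|-1) * 1 = 1. Hence the sum of chi(S^+(y)) over
   B(x) is |B(x)| - 1 = d(x). *)

From mathcomp Require Import all_boot all_order all_algebra.
Set Implicit Arguments. Unset Strict Implicit. Unset Printing Implicit Defensive.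
Import GRing.Theory Num.Theory.
Local Open Scope ring_scope.

Lemma signr_card_pred (T : finType) (A : {set T}) :
  A != set0 -> (-1) ^+ #|A|.-1 = - (-1) ^+ #|A| :> int.
Proof. by rewrite -card_gt0; case: #|A| => // n _; rewrite exprS mulN1r opprK. Qed.

Section SignedSubsetSums.
Variable T : finType.

Lemma sum_subset_sign_eq0 (s : {set T}) (a : T) :
  a \in s -> \sum_(v : {set T} | v \subset s) (-1) ^+ #|v| = 0 :> int.
Proof.
move=> a_s; pose toggle (v : {set T}) := if a \in v then v :\ a else a |: v.
have toggleK : involutive toggle.
  move=> v; rewrite /toggle; case: (boolP (a \in v)) => av.
    by rewrite setD11 setD1K.
  by rewrite setU11 setU1K.
set S := (\sum_(v | _) _).
have : S = - S.
  rewrite {1}/S (reindex_inj (inv_inj toggleK)) -sumrN /=.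
  apply: eq_big => v; rewrite /toggle; case: ifPn => av.
  - by rewrite -[in RHS](setD1K av) subUset sub1set a_s.
  - by rewrite subUset sub1set a_s.
  - by move=> _; rewrite [in RHS](cardsD1 a v) av exprS mulN1r opprK.
  - by move=> _; rewrite cardsU1 av exprS mulN1r.
by move/eqP; rewrite -subr_eq0 opprK -mulr2n mulrn_eq0 => /eqP.
Qed.

Lemma sum_nonempty_subset_sign (s : {set T}) :
  \sum_(v : {set T} | (v \subset s) && (v != set0)) (-1) ^+ #|v|.-1 = (s != set0)%:Z.
Proof.
have [->|[a a_s]] := set_0Vmem s.
  by rewrite big_pred0 ?eqxx // => v; rewrite subset0 andbN.
have /set0Pn -> : exists a, a \in s by exists a.
have := sum_subset_sign_eq0 a_s; rewrite (bigD1 set0) ?sub0set //= cards0 expr0.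
move/eqP; rewrite addr_eq0 => /eqP sum_nonempty.
under eq_bigr => v /andP[_ /signr_card_pred ->] do [].
by rewrite sumrN -sum_nonempty.
Qed.

Lemma sum_meet_inclusion_exclusion (G : {set {set T}}) (x : {set T})
    (f : {set T} -> int) :
  \sum_(y in G | x :&: y != set0) f y =
  \sum_(v : {set T} | (v \subset x) && (v != set0))
     (-1) ^+ #|v|.-1 * \sum_(y in G | v \subset y) f y.
Proof.
transitivity (\sum_(y in G) \sum_(v : {set T} | (v \subset x :&: y) && (v != set0))
                 (-1) ^+ #|v|.-1 * f y).
  rewrite big_mkcondr; apply: eq_bigr => y _.
  by rewrite -mulr_suml sum_nonempty_subset_sign; case: ifP; rewrite ?mul1r ?mul0r.
rewrite (exchange_big_dep (fun v : {set T} => (v \subset x) && (v != set0))) /=.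
  apply: eq_bigr => v /andP[vx v0]; rewrite mulr_sumr.
  by apply: eq_bigl => y; rewrite subsetI vx v0 andbT.
by move=> y v _ /andP[]; rewrite subsetI => /andP[-> _] ->.
Qed.

End SignedSubsetSums.

Section CliqueChains.
Variable V : finType.
Implicit Types (A K : {set {set V}}) (m y : {set V}).

Lemma is_clique_G1P K :
  reflect {in K &, forall a b : {set V}, a != b -> (a \subset b) || (b \subset a)}
          (is_clique_G1 K).
Proof.
apply: (iffP forall_inP) => [cl a b aK bK ab | cl a aK].
  by move/forall_inP: (cl a aK) => /(_ b bK) /implyP; apply.
by apply/forall_inP => b bK; apply/implyP; apply: cl.
Qed.

Lemma is_clique_G1S K K' : K' \subset K -> is_clique_G1 K -> is_clique_G1 K'.
Proof.
move=> /subsetP sKK' /is_clique_G1P cl; apply/is_clique_G1P => a b aK' bK'.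
exact: cl (sKK' a aK') (sKK' b bK').
Qed.

Lemma one_sub_chi A :
  1 - chi A = \sum_(K in powerset A | is_clique_G1 K) (-1) ^+ #|K|.
Proof.
rewrite (bigD1 set0) /=; last first.
  by rewrite powersetE sub0set; apply/is_clique_G1P => a b; rewrite inE.
rewrite cards0 expr0 /chi -sumrN; congr (_ + _).
apply: eq_big => [K|K /and3P[_ K0 _]]; first by rewrite andbAC -andbA.
by rewrite signr_card_pred // opprK.
Qed.

Lemma Splus_Splus A m y : m \in Splus A y -> Splus (Splus A y) m = Splus A m.
Proof.
rewrite inE => /andP[_ ym]; apply/setP => z; rewrite !inE.
by case: (boolP (m \proper z)) => mz; rewrite ?andbF // (proper_trans ym mz) !andbT.
Qed.

Lemma clique_least A K : K \subset A -> K != set0 -> is_clique_G1 K ->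
  exists m0, forall m, (m \in K) && (K :\ m \subset Splus A m) = (m == m0).
Proof.
move=> /subsetP KA /set0Pn[k0 k0K] /is_clique_G1P cl.
have [m0 m0K m0min] := arg_minnP (fun k : {set V} => #|k|) k0K.
have m0_least k : k \in K -> k != m0 -> k \in Splus A m0.
  move=> kK km0; rewrite inE KA //= properEneq eq_sym km0 /=.
  have := cl m0 k m0K kK; rewrite eq_sym km0 => /(_ isT) /orP[// | k_sub_m0].
  have : k \proper m0 by rewrite properEneq km0.
  by move/proper_card; rewrite ltnNge m0min.
exists m0 => m; apply/idP/eqP => [/andP[mK /subsetP m_least] | ->].
  apply/eqP; apply: contraT => mm0.
  have := m_least m0; rewrite in_setD1 eq_sym mm0 => /(_ m0K); rewrite inE => /andP[_ m_m0].
  have := m0_least m mK mm0; rewrite inE => /andP[_ m0_m].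
  by have := proper_trans m_m0 m0_m; rewrite properxx.
apply/andP; split=> //; apply/subsetP => k; rewrite in_setD1 => /andP[km0 kK].
exact: m0_least.
Qed.

Lemma clique_setU1_Splus A m K : K \subset Splus A m ->
  is_clique_G1 (m |: K) = is_clique_G1 K.
Proof.
move=> /subsetP K_above; apply/idP/idP; first exact/is_clique_G1S/subsetUr.
have m_sub k : k \in K -> m \subset k.
  by move/K_above; rewrite inE => /andP[_ /proper_sub].
move=> /is_clique_G1P cl; apply/is_clique_G1P => a b.
rewrite !inE => /predU1P[->|aK] /predU1P[->|bK] ab; rewrite ?subxx ?m_sub ?orbT //.
exact: cl.
Qed.

Lemma chi_rec A : chi A = \sum_(m in A) (1 - chi (Splus A m)).
Proof.
(* A nonempty chain K of A is m |: K' with m its least element and K' a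
   (possibly empty) chain of Splus A m. *)
under [RHS]eq_bigr => m _ do rewrite one_sub_chi.
pose least K m := (m \in K) && (K :\ m \subset Splus A m).
rewrite /chi; transitivity (\sum_(K in powerset A | (K != set0) && is_clique_G1 K)
                              \sum_(m | least K m) (-1) ^+ #|K|.-1 : int).
  apply: eq_bigr => K /and3P[]; rewrite powersetE => KA K0 cl.
  by have [m0 least_m0] := clique_least KA K0 cl; rewrite (big_pred1 m0 least_m0).
rewrite (exchange_big_dep (mem A)) /=; last first.
  by move=> K m /andP[]; rewrite powersetE => /subsetP KA _ /andP[/KA].
apply: eq_bigr => m mA.
rewrite (reindex_onto (fun K => m |: K) (fun K => K :\ m)) /=; last first.
  by move=> K /andP[_ /andP[mK _]]; rewrite setD1K.
apply: eq_big => K; last first.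
  by move=> /andP[_ /eqP <-]; rewrite cardsU1 setD11.
rewrite /least setU11 !powersetE; apply/idP/idP.
  case/andP=> /andP[/and3P[_ _ cl] /andP[_ above]] /eqP KE; rewrite KE in above.
  by rewrite above -(clique_setU1_Splus above).
case/andP=> above cl.
have mK : m \notin K by apply/negP => /(subsetP above); rewrite inE properxx andbF.
have KA : K \subset A by rewrite (subset_trans above) // /Splus setIdE subsetIl.
rewrite setU1K // eqxx above (clique_setU1_Splus above) cl subUset sub1set mA KA.
by rewrite !andbT; apply/set0Pn; exists m; rewrite setU11.
Qed.

End CliqueChains.

Section ConnectionGraph.
Variables (V : finType) (G : {set {set V}}).
Hypothesis G_complex : is_complex G.

Lemma complex_neq0 x : x \in G -> x != set0.
Proof. by move/forall_inP: G_complex => /[apply] /andP[]. Qed.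

Lemma complex_subset x v : x \in G -> v != set0 -> v \subset x -> v \in G.
Proof.
move=> xG v0 vx; move/forall_inP: G_complex => /(_ x xG) /andP[_ /forallP /(_ v)].
by rewrite v0 vx.
Qed.

Lemma ball_meetE x : x \in G -> ball G x = [set y in G | x :&: y != set0].
Proof.
move=> xG; apply/setP => y; rewrite !inE /conn_adj; case: (y \in G) => //=.
by have [->|//] := eqVneq y x; rewrite setIid complex_neq0.
Qed.

Lemma card_ball x : x \in G -> #|ball G x| = (degree G x).+1.
Proof.
move=> xG; have -> : ball G x = x |: [set y in G | conn_adj x y].
  by apply/setP => y; rewrite !inE; have [->|] := eqVneq y x; rewrite ?xG.
by rewrite cardsU1 inE /conn_adj eqxx andbF.
Qed.

Lemma sum_upper_one_sub_chi y : y \in G ->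
  \sum_(m in G | y \subset m) (1 - chi (Splus G m)) = 1.
Proof.
move=> yG; rewrite (bigD1 y) ?yG ?subxx //= -[RHS](subrK (chi (Splus G y))).
congr (_ + _); rewrite chi_rec (eq_bigl (fun m => m \in Splus G y)) => [|m].
  by apply: eq_bigr => m /Splus_Splus ->.
by rewrite inE properEneq eq_sym -andbA (andbC (y \subset m)).
Qed.

Lemma sum_ball_one_sub_chi x : x \in G ->
  \sum_(y in ball G x) (1 - chi (Splus G y)) = 1.
Proof.
move=> xG; rewrite ball_meetE // (eq_bigl (fun y => (y \in G) && (x :&: y != set0))) => [|y].
  transitivity ((x != set0)%:Z); last by rewrite complex_neq0.
  rewrite sum_meet_inclusion_exclusion -sum_nonempty_subset_sign.
  apply: eq_bigr => v /andP[vx v0].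
  by rewrite sum_upper_one_sub_chi ?mulr1 // (complex_subset xG v0 vx).
by rewrite inE.
Qed.

End ConnectionGraph.

Theorem mainTheorem13 (V : finType) (G : {set {set V}}) (x : {set V}) :
  is_complex G -> x \in G ->
  ((degree G x)%:Z = \sum_(y in ball G x) chi (Splus G y))%R.
Proof.
move=> G_complex xG.
have := sum_ball_one_sub_chi G_complex xG.
rewrite sumrB sumr_const card_ball // -natr1 natz => /eqP.
by rewrite subr_eq addrC => /eqP /addrI.
Qed.
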